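(* For any integer $k>0$ and any homogeneous $f\in\mathbb{C}(x_0,\dots,x_n)$ one has $\eta(\xi^k(f))=k(\deg(f)-k+1)\,\xi^{k-1}(f)$.
   Context: Here $\xi^k(f)=\sum_{|I|=k}\binom{k}{I}x^I\otimes\partial^I f\in\mathbb{C}[x_0,\dots,x_n]\otimes\mathbb{C}(x_0,\dots,x_n)$, with $I=(i_0,\dots,i_n)$ a multi-index, $|I|=i_0+\cdots+i_n$, $\binom{k}{I}=k!/(i_0!\cdots i_n!)$, $x^I=x_0^{i_0}\cdots x_n^{i_n}$, $\partial^I=\partial_{x_0}^{i_0}\cdots\partial_{x_n}^{i_n}$; $\xi^0(f)=1\otimes f$. The operator $\eta=\sum_{j}\partial_{x_j}\otimes x_j$ acts on $\mathbb{C}[x]\otimes\mathbb{C}(x)$ by $\eta(p\otimes g)=\sum_j\partial_{x_j}p\otimes x_jg$. $\deg(f)$ is the homogeneity degree of $f$. *)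

From HB Require Import structures.
From mathcomp Require Import all_boot all_order all_algebra.
From mathcomp Require Import generic_quotient fraction.
From mathcomp Require Import complex.
From mathcomp Require Import Rstruct.
From mathcomp Require Import mpoly.
From Stdlib Require Import Rdefinitions.

Set Implicit Arguments.
Unset Strict Implicit.
Unset Printing Implicit Defensive.

Import GRing.Theory.
Local Open Scope ring_scope.

Notation CC := (complex Rdefinitions.R).

Definition Pol (n : nat) := {mpoly CC[n.+1]}.
Definition RatF (n : nat) := {fraction {mpoly CC[n.+1]}}.

Definition toF n (p : {mpoly CC[n.+1]}) : RatF n := FracField.tofrac p.

(* The tensor product C[x_0..x_n] (x) C(x_0..x_n) is represented, via the
   canonical isomorphism p (x) g |-> g * p, as the polynomial ring
   C(x)[y_0..y_n] : the y-variables are the first tensor factor. *)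
Definition Tens (n : nat) := {mpoly (RatF n)[n.+1]}.

Definition fderiv n (i : 'I_n.+1) (f : RatF n) : RatF n :=
  let r := repr f in
  let p := \n_r in let q := \d_r in
  toF (mderiv i p * q - p * mderiv i q) / toF (q * q).

Definition fderivI n (I : 'X_{1..n.+1}) (f : RatF n) : RatF n :=
  foldr (fun i g => iter (I i) (fderiv i) g) f (enum 'I_n.+1).

Definition multinom n (k : nat) (I : 'X_{1..n.+1}) : nat :=
  divn (factorial k) (\prod_(i < n.+1) factorial (I i))%N.

Definition xi n (k : nat) (f : RatF n) : Tens n :=
  \sum_(I : 'X_{1..n.+1 < k.+1} | mdeg I == k)
     ((multinom k I)%:R * fderivI I f) *: 'X_[(I : 'X_{1..n.+1})].

Definition eta_op n (P : Tens n) : Tens n :=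
  \sum_(j < n.+1) toF 'X_j *: mderiv j P.

Definition homog_frac n (d : int) (f : RatF n) : Prop :=
  exists (p q : {mpoly CC[n.+1]}) (da db : nat),
    [/\ q != 0, p \is da.-homog, q \is db.-homog,
        da%:Z - db%:Z = d & f = toF p / toF q].

From Pilot Require Import Defs.
From HB Require Import structures.
From mathcomp Require Import all_boot all_order all_algebra.
From mathcomp Require Import generic_quotient fraction complex Rstruct mpoly.
From mathcomp Require Import ring zify.

(* Compare coefficients of y^m.  As eta lowers the y-degree by one and
   d_j d^m = d^(m + e_j), the coefficient of y^m in eta (xi^k f) is
   sum_j (m_j + 1) binom(k, m + e_j) x_j d_j d^m f, and the multinomial identity
   (m_j + 1) binom(k, m + e_j) = k binom(k - 1, m) turns it into
   k binom(k - 1, m) E (d^m f), where E = sum_j x_j d_j is the Euler operator.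
   Homogeneity of f of degree c is used only through Euler's identity E f = c f,
   and since [d_i, E] = d_i, every partial derivative lowers the eigenvalue by
   one: E (d^m f) = (c - |m|) d^m f with |m| = k - 1. *)

Set Implicit Arguments.
Unset Strict Implicit.
Import GRing.Theory.
Local Open Scope ring_scope.
Local Notation "x %:F" := (@FracField.tofrac _ x).

Lemma frac_reprE (R : idomainType) (f : {fraction R}) :
  f = (\n_(repr f))%:F / (\d_(repr f))%:F.
Proof.
rewrite -[f in LHS]reprK; set x := repr f.
have dx : (\d_x)%:F != 0 :> {fraction R} by rewrite tofrac_eq0 denom_ratioP.
apply: (canRL (mulfK dx)).
unlock tofrac; rewrite !piE.
apply/eqmodP; rewrite /= FracField.equivfE /FracField.mulf.
by rewrite !numden_Ratio ?mulr1 ?oner_neq0 ?denom_ratioP // mulrC.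
Qed.

Lemma fracP (R : idomainType) (f : {fraction R}) :
  exists p q : R, q != 0 /\ f = p%:F / q%:F.
Proof.
by exists \n_(repr f), \d_(repr f); split; [exact: denom_ratioP | exact: frac_reprE].
Qed.

Lemma commutator_leibniz (A : comPzRingType) (d1 d2 : A -> A) :
  {morph d1 : x y / x + y} -> {morph d2 : x y / x + y} ->
  (forall x y, d1 (x * y) = d1 x * y + x * d1 y) ->
  (forall x y, d2 (x * y) = d2 x * y + x * d2 y) ->
  forall x y, d1 (d2 (x * y)) - d2 (d1 (x * y))
    = (d1 (d2 x) - d2 (d1 x)) * y + x * (d1 (d2 y) - d2 (d1 y)).
Proof. by move=> d1D d2D d1M d2M x y; rewrite !(d1M, d2M, d1D, d2D); ring. Qed.

Section FractionDerivation.

Variables (R : idomainType) (δ : {additive R -> R}).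

Definition frac_deriv (f : {fraction R}) : {fraction R} :=
  let r := repr f in (δ \n_r * \d_r - \n_r * δ \d_r)%:F / (\d_r * \d_r)%:F.

Hypothesis δM : forall x y, δ (x * y) = δ x * y + x * δ y.

Lemma derivation1 : δ 1 = 0.
Proof.
have := δM 1 1; rewrite !mulr1 mul1r => δ1.
by apply: (@addrI _ (δ 1)); rewrite addr0 -δ1.
Qed.

Lemma frac_derivE p q : q != 0 ->
  frac_deriv (p%:F / q%:F) = (δ p * q - p * δ q)%:F / (q * q)%:F.
Proof.
move=> q0; have := frac_reprE (p%:F / q%:F); rewrite /frac_deriv.
move: (denom_ratioP (repr (p%:F / q%:F))); move: (\n_ _) (\d_ _) => N D D0 /eqP.
rewrite eqr_div ?tofrac_eq0 // -!tofracM tofrac_eq => /eqP pD.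
have /(congr1 δ) := pD; rewrite !δM => dpD.
apply/eqP; rewrite eqr_div ?tofrac_eq0 ?mulf_neq0 // -!tofracM tofrac_eq.
(* Abstract the derivatives so that [ring] does not reify the additive [δ]. *)
move: (δ p) (δ q) (δ N) (δ D) dpD => p' q' N' D' dpD.
apply/eqP/subr0_eq.
transitivity ((q' * D + q * D') * (p * D - N * q)
   - (q * D) * ((p' * D + p * D') - (N' * q + N * q'))); first ring.
by rewrite pD dpD !subrr !mulr0 subrr.
Qed.

Lemma frac_deriv_tofrac p : frac_deriv p%:F = (δ p)%:F.
Proof.
rewrite -[p%:F]divr1 -tofrac1 frac_derivE ?oner_neq0 //.
by rewrite derivation1 !mulr1 mulr0 subr0 tofrac1 divr1.
Qed.

Lemma frac_derivD f g : frac_deriv (f + g) = frac_deriv f + frac_deriv g.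
Proof.
have [a [b [b0 ->]]] := fracP f; have [c [e [e0 ->]]] := fracP g.
rewrite addf_div ?tofrac_eq0 // -!tofracM -tofracD !frac_derivE ?mulf_neq0 //.
rewrite addf_div ?tofrac_eq0 ?mulf_neq0 // -!tofracM -tofracD.
apply/eqP; rewrite eqr_div ?tofrac_eq0 ?mulf_neq0 // -!tofracM tofrac_eq; apply/eqP.
rewrite !(raddfD δ) !δM; move: (δ a) (δ b) (δ c) (δ e) => a' b' c' e'; ring.
Qed.

Lemma frac_derivM f g : frac_deriv (f * g) = frac_deriv f * g + f * frac_deriv g.
Proof.
have [a [b [b0 ->]]] := fracP f; have [c [e [e0 ->]]] := fracP g.
rewrite mulf_div -!tofracM !frac_derivE ?mulf_neq0 // !mulf_div -!tofracM.
rewrite addf_div ?tofrac_eq0 ?mulf_neq0 // -!tofracM -tofracD.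
apply/eqP; rewrite eqr_div ?tofrac_eq0 ?mulf_neq0 // -!tofracM tofrac_eq; apply/eqP.
rewrite !δM; move: (δ a) (δ b) (δ c) (δ e) => a' b' c' e'; ring.
Qed.

End FractionDerivation.

Section CommutingFractionDerivations.

Variables (R : idomainType) (δ1 δ2 : {additive R -> R}).
Hypotheses (δ1M : forall x y, δ1 (x * y) = δ1 x * y + x * δ1 y)
           (δ2M : forall x y, δ2 (x * y) = δ2 x * y + x * δ2 y)
           (δ12 : forall x, δ1 (δ2 x) = δ2 (δ1 x)).

Lemma frac_deriv_comm f :
  frac_deriv δ1 (frac_deriv δ2 f) = frac_deriv δ2 (frac_deriv δ1 f).
Proof.
pose K g := frac_deriv δ1 (frac_deriv δ2 g) - frac_deriv δ2 (frac_deriv δ1 g).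
have K_tofrac p : K p%:F = 0 by rewrite /K !frac_deriv_tofrac // δ12 subrr.
have [a [b [b0 fE]]] := fracP f.
have fb : f * b%:F = a%:F by rewrite fE mulfVK ?tofrac_eq0.
have := commutator_leibniz (frac_derivD δ1M) (frac_derivD δ2M)
  (frac_derivM δ1M) (frac_derivM δ2M) f b%:F.
rewrite -!/(K _) fb !K_tofrac mulr0 addr0 => /esym/eqP.
by rewrite mulf_eq0 tofrac_eq0 (negbTE b0) orbF subr_eq0 => /eqP.
Qed.

End CommutingFractionDerivations.

Lemma mnm_ind n (P : 'X_{1..n} -> Prop) :
  P 0%MM -> (forall m j, P m -> P (m + U_(j))%MM) -> forall m, P m.
Proof.
move=> P0 PS m; have [k] := ubnP (mdeg m); elim: k m => // k IH m.
have [-> // | m0] := eqVneq m 0%MM.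
have [j mj] : exists j, m j != 0%N.
  apply/existsP; apply: contraNT m0 => /existsPn mj0.
  by apply/eqP/mnmP => j; rewrite mnm0E; apply/eqP; rewrite -[_ == _]negbK mj0.
rewrite -(submK (_ : U_(j) <= m)%MM) ?lep1mP // => lt_mk; apply/PS/IH.
by move: lt_mk; rewrite mdegD mdeg1 addn1 ltnS.
Qed.

Lemma mpolyX_euler (R : comNzRingType) n (m : 'X_{1..n}) :
  \sum_(j < n) 'X_j * ('X_[m] : {mpoly R[n]})^`M(j) = 'X_[m] *+ mdeg m.
Proof.
rewrite mdegE -sumrMnr; apply: eq_bigr => j _.
rewrite mderivX -scalerAr scaler_nat.
have [-> | mj] := eqVneq (m j) 0%N; first by rewrite !mulr0n.
by rewrite -mpolyXD addmC submK ?lep1mP.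
Qed.

Lemma mpoly_euler (R : comNzRingType) n d (p : {mpoly R[n]}) :
  p \is d.-homog -> \sum_(j < n) 'X_j * p^`M(j) = p *+ d.
Proof.
move=> hp; rewrite [in RHS](mpolyE p) -sumrMnl.
under eq_bigr => j _ do rewrite [p in p^`M(j)]mpolyE raddf_sum mulr_sumr.
rewrite exchange_big /=; apply: eq_big_seq => m hm.
under eq_bigr => j _ do rewrite mderivZ -scalerAr.
by rewrite -scaler_sumr mpolyX_euler (dhomog_mf hp hm) scalerMnr.
Qed.

(* [fderiv i] unfolds to [frac_deriv (mderiv i)]. *)
Section RationalFunctionDerivatives.

Variable n : nat.
Implicit Types (f g : RatF n) (p q : Pol n) (i j : 'I_n.+1) (m : 'X_{1..n.+1}).

Lemma fderiv_toF i p : fderiv i (toF p) = toF p^`M(i).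
Proof. exact: (frac_deriv_tofrac (mderivM i)). Qed.

Lemma fderiv_quot i p q : q != 0 ->
  fderiv i (toF p / toF q) = toF (p^`M(i) * q - p * q^`M(i)) / toF (q * q).
Proof. exact: (frac_derivE (mderivM i)). Qed.

Lemma fderivD i : {morph fderiv i : f g / f + g}.
Proof. exact: (frac_derivD (mderivM i)). Qed.

Lemma fderivM i f g : fderiv i (f * g) = fderiv i f * g + f * fderiv i g.
Proof. exact: (frac_derivM (mderivM i)). Qed.

Lemma fderivC i j f : fderiv i (fderiv j f) = fderiv j (fderiv i f).
Proof. exact: (frac_deriv_comm (mderivM i) (mderivM j) (mderiv_comm j i)). Qed.

Lemma fderivB i : {morph fderiv i : f g / f - g}.
Proof. by move=> f g; apply: (addIr (fderiv i g)); rewrite -fderivD !subrK. Qed.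

HB.instance Definition _ i :=
  GRing.isZmodMorphism.Build (RatF n) (RatF n) (fderiv i) (fderivB i).

Lemma fderivX i j : fderiv i (toF 'X_j) = (j == i)%:R.
Proof.
rewrite fderiv_toF mderivX mnm1E; case: eqP => [-> | _]; last by rewrite scale0r raddf0.
have -> : (U_(i) - U_(i))%MM = 0%MM by apply/mnmP => k; rewrite mnmBE subnn mnm0E.
by rewrite mpolyX0 scale1r rmorph1.
Qed.

Definition euler_op f := \sum_(j < n.+1) toF 'X_j * fderiv j f.

Lemma homog_frac_euler_op d f : homog_frac d f -> euler_op f = d%:~R * f.
Proof.
case=> p [q [da [db [q0 hp hq <- ->]]]]; rewrite /euler_op.
under eq_bigr => j _ do rewrite fderiv_quot // mulrA -rmorphM.
rewrite -mulr_suml -rmorph_sum.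
have -> : \sum_(j < n.+1) 'X_j * (p^`M(j) * q - p * q^`M(j))
          = (p * q) *~ (da%:Z - db%:Z).
  transitivity ((\sum_(j < n.+1) 'X_j * p^`M(j)) * q
                - p * \sum_(j < n.+1) 'X_j * q^`M(j)).
    rewrite mulr_suml mulr_sumr -sumrB; apply: eq_bigr => j _.
    by rewrite mulrBr !mulrA [p * _]mulrC.
  by rewrite (mpoly_euler hp) (mpoly_euler hq) mulrzBl_nat -!pmulrn mulrnAl mulrnAr.
rewrite /toF rmorphMz -mulrzl !rmorphM -mulrA -mulf_div divff ?mulr1 //.
by rewrite tofrac_eq0.
Qed.

Lemma euler_op_fderiv i c f :
  euler_op f = c%:~R * f -> euler_op (fderiv i f) = (c - 1)%:~R * fderiv i f.
Proof.
move=> hf; have Ed : fderiv i (euler_op f) = fderiv i f + euler_op (fderiv i f).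
  rewrite /euler_op (big_morph _ (fderivD i) (raddf0 (fderiv i))).
  under eq_bigr => j _ do rewrite fderivM fderivX fderivC mulr_natl mulrb.
  by rewrite big_split -big_mkcond big_pred1_eq.
rewrite hf mulrzl raddfMz -mulrzl in Ed.
by rewrite rmorphB /= mulrBl mul1r Ed [_ + euler_op _]addrC addrK.
Qed.

Lemma iter_fderivC a i j f :
  iter a (fderiv i) (fderiv j f) = fderiv j (iter a (fderiv i) f).
Proof. by elim: a => [|a IH]; [reflexivity | rewrite !iterS IH; apply: fderivC]. Qed.

Lemma fderivI0 f : fderivI 0 f = f.
Proof. by rewrite /fderivI; elim: (enum _) => //= i s ->; rewrite mnm0E. Qed.

Lemma fderivI_shift m j f : fderivI (m + U_(j))%MM f = fderiv j (fderivI m f).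
Proof.
rewrite /fderivI; move: (enum_uniq 'I_n.+1) (mem_enum 'I_n.+1 j).
elim: (enum _) => //= i s IH /andP[i_s us]; rewrite in_cons mnmDE mnm1E.
have [-> _ | ji /= js] := eqVneq j i; last by rewrite addn0 IH // iter_fderivC.
rewrite addn1 /=; congr (fderiv i (iter _ _ _)); elim: s i_s {IH us} => //= k s IHs.
by rewrite in_cons negb_or => /andP[jk /IHs ->]; rewrite mnmDE mnm1E (negbTE jk) addn0.
Qed.

Lemma euler_op_fderivI c m f :
  euler_op f = c%:~R * f ->
  euler_op (fderivI m f) = (c - (mdeg m)%:Z)%:~R * fderivI m f.
Proof.
move=> hf; elim/mnm_ind: m => [|m j IH]; first by rewrite fderivI0 mdeg0 subr0.
by rewrite fderivI_shift (euler_op_fderiv j IH) mdegD mdeg1 PoszD opprD addrA.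
Qed.

End RationalFunctionDerivatives.

Lemma prod_fact_dvd (I : Type) (r : seq I) (F : I -> nat) :
  (\prod_(i <- r) (F i)`! %| (\sum_(i <- r) F i)`!)%N.
Proof.
elim: r => [|i r IH]; first by rewrite !big_nil.
rewrite !big_cons; apply: dvdn_trans (dvdn_mul (dvdnn _) IH) _.
by rewrite -(bin_fact (leq_addr _ (F i))) addKn dvdn_mull.
Qed.

(* Unqualified [multinom] is mpoly's type of multinomials. *)
Lemma multinomE n (m : 'X_{1..n.+1}) :
  (Defs.multinom (mdeg m) m * \prod_(i < n.+1) (m i)`! = (mdeg m)`!)%N.
Proof. by rewrite /Defs.multinom divnK // mdegE prod_fact_dvd. Qed.

Lemma prod_fact_shift n (m : 'X_{1..n.+1}) j :
  (\prod_(i < n.+1) ((m + U_(j))%MM i)`! = (m j).+1 * \prod_(i < n.+1) (m i)`!)%N.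
Proof.
rewrite (bigD1 j) // [in RHS](bigD1 j) //= mnmDE mnm1E eqxx addn1 factS -mulnA.
congr (_ * (_ * _))%N; apply: eq_bigr => i /negbTE ij.
by rewrite mnmDE mnm1E eq_sym ij addn0.
Qed.

Lemma multinom_shift n (m : 'X_{1..n.+1}) j :
  ((m j).+1 * Defs.multinom (mdeg m).+1 (m + U_(j))
   = (mdeg m).+1 * Defs.multinom (mdeg m) m)%N.
Proof.
have P0 : (0 < \prod_(i < n.+1) (m i)`!)%N by rewrite prodn_gt0 // => i; apply: fact_gt0.
have := multinomE (m + U_(j)); rewrite prod_fact_shift mdegD mdeg1 addn1 => Em'.
by apply/eqP; rewrite -(eqn_pmul2r P0) -!mulnA mulnCA Em' multinomE factS.
Qed.

Lemma mcoeff_xi n k (f : RatF n) m :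
  (xi k f)@_m = if mdeg m == k then (Defs.multinom k m)%:R * fderivI m f else 0.
Proof.
rewrite /xi raddf_sum /=.
under eq_bigr => I _ do rewrite mcoeffZ mcoeffX mulr_natr mulrb.
rewrite -big_mkcondr /=; case: eqP => [mk | mk].
- have mk' : (mdeg m < k.+1)%N by rewrite mk.
  rewrite (big_pred1 (BMultinom mk')) // => I /=; rewrite bmeqP /=.
  by case: (eqVneq (val I) m) => [-> | _]; rewrite ?mk ?eqxx ?andbF.
- rewrite big_pred0 // => I; case: (eqVneq (val I) m) => [eIm | _]; last by rewrite andbF.
  by rewrite eIm andbT; apply/negbTE/eqP.
Qed.

Lemma mcoeff_eta_op n (P : Tens n) m :
  (eta_op P)@_m = \sum_(j < n.+1) toF 'X_j * (P@_(m + U_(j)) *+ (m j).+1).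
Proof.
by rewrite /eta_op raddf_sum; apply: eq_bigr => j _; rewrite /= mcoeffZ mcoeff_mderiv.
Qed.

Theorem lemma4p3 (n : nat) (k : nat) (hk : (0 < k)%N) (d : int) (f : RatF n) :
  homog_frac d f ->
  eta_op (xi k f) = ((k%:Z * (d - k%:Z + 1))%:~R : RatF n) *: xi k.-1 f.
Proof.
move=> hf; apply/mpolyP => m; rewrite mcoeff_eta_op mcoeffZ mcoeff_xi.
case: k hk => // k _ /=.
under eq_bigr => j _ do rewrite mcoeff_xi mdegD mdeg1 addn1 eqSS fderivI_shift.
case: eqP => [<- | _]; last by rewrite mulr0 big1 // => j _; rewrite mul0rn mulr0.
set D := mdeg m; set M := Defs.multinom D m; set G := fderivI m f.
transitivity ((D.+1 * M)%:R * euler_op G).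
  rewrite /euler_op mulr_sumr; apply: eq_bigr => j _.
  by rewrite -(multinom_shift m j) -mulrnAl -mulr_natr -natrM mulnC mulrCA.
rewrite (euler_op_fderivI _ (homog_frac_euler_op hf)) -/D -/G.
have -> : D.+1%:Z * (d - D.+1%:Z + 1) = D.+1%:Z * (d - D%:Z) by lia.
by rewrite intrM natrM mulrACA.
Qed.
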